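(* Let $\mathcal L\subseteq\mathfrak P(S)$ be an algebraic lattice of sets and let $c$ be a closure operation on $\mathcal L$. Then $$\mathrm{Cl}^\mathrm{cons}(\{F^c\mid F\in\mathcal L_\mathrm{fin}\})=\mathrm{Cl}^\mathrm{cons}(\mathcal L^c)=\mathcal L^{c_f},$$ closures being taken in $\mathcal L$ with the constructible topology.
   Context: $S$ is a nonempty set. An algebraic lattice of sets is a family $\mathcal L\subseteq\mathfrak P(S)$ closed under arbitrary intersections and nonempty up-directed unions. For $F\subseteq S$ let $\langle F\rangle$ be the intersection of all members of $\mathcal L$ containing $F$; $A\in\mathcal L$ is finitely generated if $A=\langle F\rangle$ for a finite $F$, and $\mathcal L_\mathrm{fin}$ is the set of such. A closure operation on $\mathcal L$ is a map $c:\mathcal L\to\mathcal L$, $A\mapsto A^c$, with $A\subseteq A^c$, $A\subseteq B\Rightarrow A^c\subseteq B^c$, $(A^c)^c=A^c$. Its finite-type associate is $A^{c_f}:=\bigcup\{F^c\mid F\in\mathcal L_\mathrm{fin},\ F\subseteq A\}$. For a closure $d$, $\mathcal L^d:=\{A\in\mathcal L\mid A^d=A\}$. The Zariski topology on $\mathcal L$ has basis $\{A\in\mathcal L\mid G\subseteq A\}$, $G\subseteq S$ finite; it is spectral, and the constructible topology is the coarsest topology in which all its open quasi-compact sets are clopen. *)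

From mathcomp Require Import all_boot.
From mathcomp Require Import boolp classical_sets cardinality.
Set Implicit Arguments. Unset Strict Implicit. Unset Printing Implicit Defensive.
Local Open Scope classical_set_scope.

(** Algebraic lattice of sets: closed under arbitrary intersections
    (the empty intersection being the whole of S) and nonempty up-directed unions. *)
Definition updirected {S : Type} (D : set (set S)) : Prop :=
  forall A B, D A -> D B -> exists2 C, D C & (A `<=` C /\ B `<=` C).

Definition algebraic_lattice {S : Type} (L : set (set S)) : Prop :=
  (forall F : set (set S), F `<=` L -> L (\bigcap_(A in F) A)) /\
  (forall D : set (set S), D `<=` L -> D !=set0 -> updirected D ->
     L (\bigcup_(A in D) A)).

Definition gen {S : Type} (L : set (set S)) (F : set S) : set S :=
  \bigcap_(A in [set A | L A /\ F `<=` A]) A.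

Definition Lfin {S : Type} (L : set (set S)) : set (set S) :=
  [set A | L A /\ exists2 F : set S, finite_set F & A = gen L F].

(** Closure operation on L (a map L -> L; values outside L are irrelevant). *)
Definition closure_op {S : Type} (L : set (set S)) (c : set S -> set S) : Prop :=
  [/\ (forall A, L A -> L (c A)),
      (forall A, L A -> A `<=` c A),
      (forall A B, L A -> L B -> A `<=` B -> c A `<=` c B) &
      (forall A, L A -> c (c A) = c A)].

Definition finite_type_assoc {S : Type} (L : set (set S)) (c : set S -> set S)
  : set S -> set S :=
  fun A => \bigcup_(F in [set F | Lfin L F /\ F `<=` A]) c F.

Definition fixed_of {S : Type} (L : set (set S)) (d : set S -> set S) : set (set S) :=
  [set A | L A /\ d A = A].

Definition zariski_basic {S : Type} (L : set (set S)) (G : set S) : set (set S) :=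
  [set A | L A /\ G `<=` A].

Definition zariski_open {S : Type} (L : set (set S)) (V : set (set S)) : Prop :=
  V `<=` L /\
  forall A, V A -> exists G : set S,
     [/\ finite_set G, G `<=` A & zariski_basic L G `<=` V].

Definition zariski_quasi_compact {S : Type} (L : set (set S)) (K : set (set S)) : Prop :=
  K `<=` L /\
  forall C : set (set (set S)), C `<=` zariski_open L ->
    K `<=` \bigcup_(U in C) U ->
    exists D : set (set (set S)),
      [/\ finite_set D, D `<=` C & K `<=` \bigcup_(U in D) U].

(** Open sets of the topology on the space X generated by the subbasis sb
    (sets of sb are assumed to be subsets of X). *)
Definition generated_open {T : Type} (X : set T) (sb : set (set T)) (V : set T) : Prop :=
  V `<=` X /\
  forall x, V x -> exists F : set (set T),
    [/\ finite_set F, F `<=` sb, (forall U, F U -> U x) &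
         X `&` (\bigcap_(U in F) U) `<=` V].

(** Constructible topology: the coarsest topology on L in which all open
    quasi-compact sets of the Zariski topology are clopen, i.e. the topology
    generated by these sets and their complements in L. *)
Definition constructible_subbasis {S : Type} (L : set (set S)) : set (set (set S)) :=
  [set W | exists2 U, zariski_open L U /\ zariski_quasi_compact L U &
                      (W = U \/ W = L `\` U)].

Definition constructible_open {S : Type} (L : set (set S)) : set (set (set S)) :=
  generated_open L (constructible_subbasis L).

Definition cons_closure {S : Type} (L : set (set S)) (Y : set (set S)) : set (set S) :=
  [set A | L A /\ forall V, constructible_open L V -> V A -> V `&` Y !=set0].

From mathcomp Require Import all_boot.
From mathcomp Require Import boolp classical_sets cardinality.
Local Open Scope classical_set_scope.
Set Implicit Arguments. Unset Strict Implicit.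

(** Zariski-open subsets of L are upward closed, and <G> is the least element
    of the basic open set given by a finite G.  Hence every constructible
    neighbourhood of A contains an interval {B in L | G <= B <= A} with G <= A
    finite.  If A is c_f-closed, then c(<G>) lies in that interval, so the sets
    c(F), F in L_fin, are dense in L^{c_f}.  Conversely, if x is in c(<G>) with
    G <= A but x is not in A, the constructible open set {B | G <= B, x \notin B}
    contains A and misses L^{c_f}, so L^{c_f} is closed.  Since
    {c(F)} <= L^c <= L^{c_f}, the three closures coincide. *)

Lemma generated_openI_subbasis (T : Type) (X : set T) (sb : set (set T)) U W :
  U `<=` X -> sb U -> sb W -> generated_open X sb (U `&` W).
Proof.
move=> UX sbU sbW; split=> [x [/UX //]|x [Ux Wx]].
exists [set U; W]; split=> [||V [->|->] //|y [_ UWy]].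
- exact: finite_set2.
- by move=> V [->|->].
- by split; apply: UWy; [left|right].
Qed.

Section Lattice.
Variables (S : Type) (L : set (set S)).

Lemma sub_gen F : F `<=` gen L F.
Proof. by move=> x Fx A [_]; apply. Qed.

Lemma gen_sub F B : L B -> F `<=` B -> gen L F `<=` B.
Proof. by move=> LB FB x; apply. Qed.

Lemma zariski_open_upclosed U A B :
  zariski_open L U -> U A -> L B -> A `<=` B -> U B.
Proof.
by case=> _ oU /oU [G [_ GA GU]] LB AB; apply: GU; split=> //; apply: subset_trans AB.
Qed.

Lemma zariski_open_basic G : finite_set G -> zariski_open L (zariski_basic L G).
Proof. by move=> fG; split=> [A []//|A [LA GA]]; exists G; split. Qed.

Lemma constructible_subbasis_interval W A :
  constructible_subbasis L W -> W A ->
  exists G, [/\ finite_set G, G `<=` A &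
                forall B, L B -> G `<=` B -> B `<=` A -> W B].
Proof.
case=> U [oU _] [->|-> [LA UnA]].
  case: (oU) => _ /[apply] -[G [fG GA GU]].
  by exists G; split=> // B LB GB _; apply: GU.
exists set0; split=> [|//|B LB _ BA]; first exact: finite_set0.
by split=> // UB; apply: UnA; apply: zariski_open_upclosed BA.
Qed.

Lemma constructible_open_interval V A :
  constructible_open L V -> V A ->
  exists G, [/\ finite_set G, G `<=` A &
                forall B, L B -> G `<=` B -> B `<=` A -> V B].
Proof.
case=> _ /[apply] -[Fm [fFm Fmsb FmA FmV]].
have /choice [g gP] : forall W, exists G, Fm W ->
    [/\ finite_set G, G `<=` A & forall B, L B -> G `<=` B -> B `<=` A -> W B].
  move=> W; have [FmW|] := pselect (Fm W); last by exists set0.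
  by have [G ?] := constructible_subbasis_interval (Fmsb W FmW) (FmA W FmW); exists G.
exists (\bigcup_(W in Fm) g W); split.
- by apply: bigcup_finite => // W /gP [].
- by move=> x [W /gP [_ gA _]]; apply: gA.
- move=> B LB gB BA; apply: FmV; split=> // W FmW.
  by have [_ _ gW] := gP W FmW; apply: gW => // x gx; apply: gB; exists W.
Qed.

Hypothesis L_bigcap : forall F, F `<=` L -> L (\bigcap_(A in F) A).

Lemma gen_in_L F : L (gen L F).
Proof. by apply: L_bigcap => A []. Qed.

Lemma Lfin_gen G : finite_set G -> Lfin L (gen L G).
Proof. by move=> fG; split; [exact: gen_in_L | exists G]. Qed.

Lemma zariski_quasi_compact_basic G :
  finite_set G -> zariski_quasi_compact L (zariski_basic L G).
Proof.
move=> fG; split=> [A []//|C CU cover].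
have [U CU_U UG] := cover _ (conj (gen_in_L G) (@sub_gen G)).
exists [set U]; split=> [||B [LB GB]]; [exact: finite_set1 | by move=> ? -> |].
exists U => //; apply: (zariski_open_upclosed (CU U CU_U) UG) => //.
exact: gen_sub.
Qed.

Lemma constructible_subbasis_basic G :
  finite_set G -> constructible_subbasis L (zariski_basic L G).
Proof.
move=> fG; exists (zariski_basic L G); last by left.
by split; [exact: zariski_open_basic | exact: zariski_quasi_compact_basic].
Qed.

Lemma constructible_subbasis_basicC G :
  finite_set G -> constructible_subbasis L (L `\` zariski_basic L G).
Proof.
move=> fG; exists (zariski_basic L G); last by right.
by split; [exact: zariski_open_basic | exact: zariski_quasi_compact_basic].
Qed.

Lemma constructible_open_basicI_basicC G H : finite_set G -> finite_set H ->
  constructible_open L (zariski_basic L G `&` (L `\` zariski_basic L H)).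
Proof.
move=> fG fH; apply: generated_openI_subbasis.
- by move=> A [].
- exact: constructible_subbasis_basic.
- exact: constructible_subbasis_basicC.
Qed.

Lemma cons_closureS Y Z : Y `<=` Z -> cons_closure L Y `<=` cons_closure L Z.
Proof.
move=> YZ A [LA YA]; split=> // V oV VA.
by have [B [VB /YZ ZB]] := YA V oV VA; exists B.
Qed.

Variable c : set S -> set S.
Hypothesis c_in_L : forall A, L A -> L (c A).
Hypothesis c_extensive : forall A, L A -> A `<=` c A.
Hypothesis c_monotone : forall A B, L A -> L B -> A `<=` B -> c A `<=` c B.
Hypothesis c_idempotent : forall A, L A -> c (c A) = c A.

Local Notation cf := (finite_type_assoc L c).

Lemma c_sub_cf A F : Lfin L F -> F `<=` A -> c F `<=` cf A.
Proof. by move=> LF FA x cFx; exists F. Qed.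

Lemma sub_cf A : L A -> A `<=` cf A.
Proof.
move=> LA x Ax; apply: (@c_sub_cf A (gen L [set x])).
- exact/Lfin_gen/finite_set1.
- by apply: gen_sub => // y ->.
- by apply/c_extensive; [exact: gen_in_L | exact: sub_gen].
Qed.

Lemma fixed_cfP A : L A -> (forall F, Lfin L F -> F `<=` A -> c F `<=` A) ->
  fixed_of L cf A.
Proof.
move=> LA cFA; split=> //; apply/seteqP; split; last exact: sub_cf.
by move=> x [F [LF FA]]; apply: cFA.
Qed.

Lemma fixed_c_sub_fixed_cf : fixed_of L c `<=` fixed_of L cf.
Proof.
move=> A [LA cA]; apply: fixed_cfP => // F [LF _] FA.
by rewrite -cA; apply: c_monotone.
Qed.

Lemma c_Lfin_sub_fixed_c : c @` Lfin L `<=` fixed_of L c.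
Proof. by move=> _ [F [LF _] <-]; split; [exact: c_in_L | exact: c_idempotent]. Qed.

Lemma cons_closure_fixed_cf : cons_closure L (fixed_of L cf) `<=` fixed_of L cf.
Proof.
move=> A [LA near_fixed]; apply: fixed_cfP => // F [LF [G fG ->]] FA x cFx.
apply: contrapT => Anx.
have [|B [[[_ GB] [_ Bnx]] [LB cfB]]] :=
  near_fixed _ (constructible_open_basicI_basicC fG (finite_set1 x)).
  split; first by split=> //; apply: subset_trans FA; exact: sub_gen.
  by split=> // -[_ xA]; apply: Anx; apply: xA.
apply: Bnx; split=> // _ ->; rewrite -cfB.
by apply: c_sub_cf cFx; [exact: Lfin_gen | exact: gen_sub].
Qed.

Lemma fixed_cf_sub_cons_closure : fixed_of L cf `<=` cons_closure L (c @` Lfin L).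
Proof.
move=> A [LA cfA]; split=> // V oV VA.
have [G [fG GA GV]] := constructible_open_interval oV VA.
exists (c (gen L G)); split; last by exists (gen L G); first exact: Lfin_gen.
have Lg := gen_in_L G.
apply: GV; first exact: c_in_L.
- by apply: subset_trans (c_extensive Lg); exact: sub_gen.
- by rewrite -cfA; apply: c_sub_cf; [exact: Lfin_gen | exact: gen_sub].
Qed.

End Lattice.

Theorem proposition4p5 (S : Type) (s0 : S) (L : set (set S)) (c : set S -> set S) :
  algebraic_lattice L -> closure_op L c ->
  cons_closure L (c @` Lfin L) = cons_closure L (fixed_of L c) /\
  cons_closure L (fixed_of L c) = fixed_of L (finite_type_assoc L c).
Proof.
move=> [L_bigcap _] [c_in_L c_ext c_mono c_idem].
have image_fixed : cons_closure L (c @` Lfin L) `<=` cons_closure L (fixed_of L c).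
  exact/cons_closureS/(c_Lfin_sub_fixed_c c_in_L c_idem).
have fixed_closed : cons_closure L (fixed_of L c) `<=` fixed_of L (finite_type_assoc L c).
  apply: subset_trans (cons_closure_fixed_cf L_bigcap c_ext).
  exact/cons_closureS/(fixed_c_sub_fixed_cf L_bigcap c_ext c_mono).
have dense := fixed_cf_sub_cons_closure L_bigcap c_in_L c_ext.
split; apply/seteqP; split=> //.
- exact: subset_trans fixed_closed dense.
- exact: subset_trans dense image_fixed.
Qed.
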